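(* Let $(E,(\cdot,\cdot),\mathcal H)$ be an extended affine Lie algebra with root system $R$, let $R'$ be a closed subsystem of $R$ and let $\mathcal H'$ be a cover of $R'$. Then the Lie cover $E_{R',\mathcal H'}$ (with the bracket and form of $E$) is an extended affine Lie algebra with Cartan subalgebra $\mathcal H'$ and root system $R'$ (each $\alpha\in R'$ identified with its restriction to $\mathcal H'$). In particular, $E_{R',\mathcal H}$ is an extended affine Lie algebra with root system $R'$.
   Context: All Lie algebras are over $\mathbb C$. An extended affine Lie algebra (EALA) is a triple $(E,(\cdot,\cdot),\mathcal H)$ where $E$ is a Lie algebra, $\mathcal H$ a subalgebra and $(\cdot,\cdot)$ a bilinear form on $E$ such that: (EA1) symmetric, non-degenerate, invariant form; (EA2) $\mathcal H$ finite-dimensional, $E=\bigoplus_{\alpha\in\mathcal H^*}E_\alpha$, $E_\alpha=\{x:[h,x]=\alpha(h)x\ \forall h\in\mathcal H\}$, $E_0=\mathcal H$; root system $R=\{\alpha:E_\alpha\ne0\}$; $t_\alpha\in\mathcal H$ given by $\alpha(h)=(h,t_\alpha)$, $(\alpha,\beta):=(t_\alpha,t_\beta)$, $R^\times=\{\alpha\in R:(\alpha,\alpha)\neq0\}$, $R^0=R\setminus R^\times$; (EA3) $\mathrm{ad}\,x$ locally nilpotent for $x\in E_\alpha$, $\alpha\in R^\times$; (EA4) $R$ discrete; (EA5) $R^\times$ connected (not a union of two nonempty mutually orthogonal subsets) and every $\sigma\in R^0$ non-isolated ($\alpha+\sigma\in R$ for some $\alpha\in R^\times$). Throughout the finite root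 system obtained from $R$ modulo $\mathrm{span}_{\mathbb R}R^0$ is assumed reduced. Extended affine root system (EARS): a triple $(R,(\cdot,\cdot),\mathcal V)$, $\mathcal V$ finite-dimensional real, form symmetric positive semidefinite, $R\subseteq\mathcal V$ with: $0\in R$; $R=-R$; $R$ spans $\mathcal V$; $\alpha\in R^\times\Rightarrow2\alpha\notin R$; $R$ discrete; root string property (for $\alpha\in R^\times,\beta\in R$ there are integers $d,u\ge0$ with $(\beta+\mathbb Z\alpha)\cap R=\{\beta-d\alpha,\dots,\beta+u\alpha\}$ and $2(\beta,\alpha)/(\alpha,\alpha)=d-u$); isotropic roots non-isolated; $R^\times$ connected. A subsystem of $R$ is $R'\subseteq R$ with $(R',(\cdot,\cdot)|,\mathrm{span}_{\mathbb R}R')$ an EARS; it is closed if $\alpha,\beta\in R'$, $\alpha+\beta\in R$ imply $\alpha+\beta\in R'$. A cover of a closed subsystem $R'$ is a subspace $\mathcal H'\subseteq\mathcal H$ with $t_\alpha\in\mathcal H'$ for all $\alpha\in R'^\times$ such that the form restricted to $\mathcal H'$ is non-degenerate. The Lie cover is $E_{R',\mathcal H'}:=\mathcal H'\oplus\sum_{\alpha\in R'\setminus\{0\}}E_\alpha$. *)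

From mathcomp Require Import all_boot all_order all_algebra.
From mathcomp Require Import reals complex.
Set Implicit Arguments.
Unset Strict Implicit.
Unset Printing Implicit Defensive.
Import Order.TTheory GRing.Theory Num.Theory.
Local Open Scope ring_scope.

(* The complex numbers are R[i] for a real-number field R : realType
   (every realType is isomorphic to the reals, so R[i] is C).
   A Lie algebra E is modelled as a subset A of an ambient C-module V
   (A = whole V for E itself; A = the Lie cover for sub-algebras),
   with bracket [br] and form [fm] on V.  The Cartan subalgebra is a
   finite-dimensional C-vector space H (a vectType) together with an
   injective linear embedding [iota : H -> V]; elements of H^* are
   functions H -> C which are linear. *)

Section EALA.
Variable (R : realType).
Local Notation C := (R[i]).
Variable (V : lmodType C) (br : V -> V -> V) (fm : V -> V -> C).
Variable (H : vectType C) (iota : H -> V).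

Definition fnl_set := (H -> C) -> Prop.

Definition is_lin_fnl (a : H -> C) : Prop :=
  forall (k : C) (h1 h2 : H), a (k *: h1 + h2) = k * a h1 + a h2.

Definition fnl0 : H -> C := fun _ => 0.
Definition fnl_add (a b : H -> C) : H -> C := fun h => a h + b h.
Definition fnl_opp (a : H -> C) : H -> C := fun h => - a h.
Definition fnl_scale (k : C) (a : H -> C) : H -> C := fun h => k * a h.

Definition weight_vec (A : V -> Prop) (a : H -> C) (x : V) : Prop :=
  A x /\ forall h : H, br (iota h) x = a h *: x.

Definition root_set (A : V -> Prop) : fnl_set :=
  fun a => is_lin_fnl a /\ exists x, weight_vec A a x /\ x <> 0.

Definition is_tvec (a : H -> C) (t : H) : Prop :=
  forall h : H, a h = fm (iota h) (iota t).

(* (alpha, beta) = (t_alpha, t_beta) has value c *)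
Definition fnl_form (a b : H -> C) (c : C) : Prop :=
  exists ta tb, is_tvec a ta /\ is_tvec b tb /\ fm (iota ta) (iota tb) = c.

Definition nonisotropic (a : H -> C) : Prop :=
  exists c, fnl_form a a c /\ c <> 0.

Definition fnl_orth (a b : H -> C) : Prop := fnl_form a b 0.

(* discreteness of a set of functionals in the (finite-dimensional)
   space H^*, using the max norm of the coordinates w.r.t. a basis of H
   (all norms on H^* give the same topology) *)
Definition discrete_set (S : fnl_set) : Prop :=
  forall a, S a -> exists eps : C, 0 < eps /\
    forall b, S b ->
      (forall i : 'I_(\dim {:H}),
         `| b (tnth (vbasis {:H}) i) - a (tnth (vbasis {:H}) i) | < eps) ->
      b = a.

Definition connected_nonisotropic (S : fnl_set) : Prop :=
  forall P Q : fnl_set,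
    (forall a, (S a /\ nonisotropic a) <-> (P a \/ Q a)) ->
    (exists a, P a) -> (exists b, Q b) ->
    ~ (forall a b, P a -> Q b -> fnl_orth a b).

Definition isotropic_nonisolated (S : fnl_set) : Prop :=
  forall s, S s -> ~ nonisotropic s ->
    exists a, S a /\ nonisotropic a /\ S (fnl_add a s).

Definition in_real_span (S : fnl_set) (v : H -> C) : Prop :=
  exists (n : nat) (a : 'I_n -> H -> C) (r : 'I_n -> C),
    (forall i, S (a i) /\ r i \is Num.real) /\
    v = (fun h => \sum_(i < n) r i * a i h).

Definition is_lie_subalgebra (A : V -> Prop) : Prop :=
  A 0 /\
  (forall (k : C) x y, A x -> A y -> A (k *: x + y)) /\
  [/\ (forall x y, A x -> A y -> A (br x y)),
      (forall (k : C) x y z, A x -> A y -> A z ->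
          br (k *: x + y) z = k *: br x z + br y z
       /\ br z (k *: x + y) = k *: br z x + br z y),
      (forall x, A x -> br x x = 0) &
      (forall x y z, A x -> A y -> A z ->
          br x (br y z) + br y (br z x) + br z (br x y) = 0)].

Definition EA1 (A : V -> Prop) : Prop :=
  [/\ (forall (k : C) x y z, A x -> A y -> A z ->
          fm (k *: x + y) z = k * fm x z + fm y z),
      (forall x y, A x -> A y -> fm x y = fm y x),
      (forall x, A x -> (forall y, A y -> fm x y = 0) -> x = 0) &
      (forall x y z, A x -> A y -> A z -> fm (br x y) z = fm x (br y z))].

Definition EA2 (A : V -> Prop) : Prop :=
  (forall (k : C) h1 h2, iota (k *: h1 + h2) = k *: iota h1 + iota h2) /\
  injective iota /\
  [/\ (forall h, A (iota h)),
      (forall h1 h2, exists h3, br (iota h1) (iota h2) = iota h3),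
      (forall x, A x -> exists (n : nat) (a : 'I_n -> H -> C) (y : 'I_n -> V),
          (forall i j, a i = a j -> i = j) /\
          (forall i, is_lin_fnl (a i) /\ weight_vec A (a i) (y i)) /\
          x = \sum_(i < n) y i),
      (forall (n : nat) (a : 'I_n -> H -> C) (y : 'I_n -> V),
          (forall i j, a i = a j -> i = j) ->
          (forall i, is_lin_fnl (a i) /\ weight_vec A (a i) (y i)) ->
          \sum_(i < n) y i = 0 -> forall i, y i = 0) &
      (forall x, weight_vec A fnl0 x <-> exists h, x = iota h)].

Definition EA3 (A : V -> Prop) : Prop :=
  forall a x, root_set A a -> nonisotropic a -> weight_vec A a x ->
    forall y, A y -> exists n : nat, iter n (br x) y = 0.

Definition EA4 (A : V -> Prop) : Prop := discrete_set (root_set A).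

Definition EA5 (A : V -> Prop) : Prop :=
  connected_nonisotropic (root_set A) /\ isotropic_nonisolated (root_set A).

Definition is_EALA (A : V -> Prop) : Prop :=
  is_lie_subalgebra A /\ EA1 A /\ [/\ EA2 A, EA3 A, EA4 A & EA5 A].

(* standing assumption: the finite root system R / span_R R^0 is reduced,
   i.e. there are no nonisotropic root_set a, b with b - 2a in span_R R^0 *)
Definition reduced_quotient (S : fnl_set) : Prop :=
  ~ exists a b, S a /\ nonisotropic a /\ S b /\ nonisotropic b /\
      in_real_span (fun s => S s /\ ~ nonisotropic s)
                   (fun h => b h - 2 * a h).

(* Extended affine root system (S, (.,.), span_R S), with the form on
   H^* transported from E via the t_alpha *)
Definition is_EARS (S : fnl_set) : Prop :=
  (forall a, S a -> is_lin_fnl a) /\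
  S fnl0 /\
  (forall a, S a -> S (fnl_opp a)) /\
  (forall a, S a -> nonisotropic a -> ~ S (fnl_scale 2 a)) /\
  discrete_set S /\
  [/\
      (forall a b c, in_real_span S a -> in_real_span S b ->
          fnl_form a b c -> c \is Num.real /\ fnl_form b a c),
      (forall a c, in_real_span S a -> fnl_form a a c -> 0 <= c),
      (forall a b, S a -> nonisotropic a -> S b ->
          exists d u : nat,
            (forall k : int,
               S (fun h => b h + k%:~R * a h) <-> (- (d%:Z) <= k <= u%:Z)%R) /\
            (forall cba caa, fnl_form b a cba -> fnl_form a a caa ->
               2 * cba / caa = d%:R - u%:R)) &
      isotropic_nonisolated S /\ connected_nonisotropic S].

Definition is_subsystem (S' S : fnl_set) : Prop :=
  (forall a, S' a -> S a) /\ is_EARS S'.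

Definition is_closed_subsystem (S' S : fnl_set) : Prop :=
  is_subsystem S' S /\
  (forall a b, S' a -> S' b -> S (fnl_add a b) -> S' (fnl_add a b)).

Definition is_cover (S' : fnl_set) (H' : {vspace H}) : Prop :=
  (forall a t, S' a -> nonisotropic a -> is_tvec a t -> t \in H') /\
  (forall h, h \in H' ->
     (forall h', h' \in H' -> fm (iota h) (iota h') = 0) -> h = 0).

End EALA.

Definition lie_cover (R : realType) (V : lmodType R[i]) (br : V -> V -> V)
  (H : vectType R[i]) (iota : H -> V) (S' : fnl_set H) (Hp : H -> Prop)
  (x : V) : Prop :=
  exists (h : H) (n : nat) (a : 'I_n -> H -> R[i]) (y : 'I_n -> V),
    Hp h /\
    (forall i, S' (a i) /\ a i <> @fnl0 R H /\
               weight_vec br iota (fun _ => True) (a i) (y i)) /\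
    x = iota h + \sum_(i < n) y i.

From mathcomp Require Import all_boot all_order all_algebra.
From mathcomp Require Import reals complex ring.
From Stdlib Require Import Classical FunctionalExtensionality ClassicalEpsilon.
Import Order.TTheory GRing.Theory Num.Theory.
Local Open Scope ring_scope.
Set Implicit Arguments.
Unset Strict Implicit.
Unset Printing Implicit Defensive.

(* Every root a of R' is represented by a vector t_a in K, i.e. a = (-, t_a):
   for nonisotropic a this is the cover hypothesis, and an isotropic a is the
   difference of the nonisotropic roots b + a and b provided by non-isolation.
   As the form is nondegenerate on K, restricting functionals to K is then
   injective on R' and preserves the values (a, b).  The Lie cover is the sum
   of K and of the root spaces E_a, a in R' \ 0; it is a subalgebra because R'
   is closed and [E_a, E_-a] lies in C t_a.  Decomposing its elements along the
   root spaces of E shows that its K-weight spaces are exactly the E_a, a in R',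
   with weight the restriction of a, so the EALA axioms pass from E and R' to
   the cover.  Nothing uses more about K than an injective linear map into H, so
   the cover by H' and the cover by H are two instances of one argument. *)

Definition ocons T (x0 : T) n (f : 'I_n -> T) : 'I_n.+1 -> T :=
  fun i => if unlift ord0 i is Some j then f j else x0.

Lemma ocons0 T (x0 : T) n (f : 'I_n -> T) : ocons x0 f ord0 = x0.
Proof. by rewrite /ocons unlift_none. Qed.

Lemma oconsS T (x0 : T) n (f : 'I_n -> T) j : ocons x0 f (lift ord0 j) = f j.
Proof. by rewrite /ocons liftK. Qed.

Lemma ocons_ind n (P : 'I_n.+1 -> Prop) :
  P ord0 -> (forall j, P (lift ord0 j)) -> forall i, P i.
Proof. by move=> P0 PS i; case: (unliftP ord0 i) => [j ->|->]. Qed.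

Lemma ocons_inj T (x0 : T) n (f : 'I_n -> T) :
  injective f -> (forall j, f j <> x0) -> injective (ocons x0 f).
Proof.
move=> f_inj fx0; elim/ocons_ind => [|i]; elim/ocons_ind => [|j];
  rewrite ?ocons0 ?oconsS //.
- by move/esym/fx0.
- by move/fx0.
- by move/f_inj ->.
Qed.

Lemma sum_ocons (W : nmodType) (x0 : W) n (f : 'I_n -> W) :
  \sum_(i < n.+1) ocons x0 f i = x0 + \sum_(i < n) f i.
Proof. by rewrite big_ord_recl ocons0; under eq_bigr do rewrite oconsS. Qed.

Lemma sum_regroup_distinct (F : Type) (W : zmodType) (P : F -> W -> Prop) :
  (forall a y1 y2, P a y1 -> P a y2 -> P a (y1 + y2)) ->
  forall n (a : 'I_n -> F) (y : 'I_n -> W), (forall i, P (a i) (y i)) ->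
  exists m (a' : 'I_m -> F) (y' : 'I_m -> W),
    [/\ injective a', forall i, P (a' i) (y' i)
      & \sum_(i < n) y i = \sum_(i < m) y' i].
Proof.
move=> Padd; elim=> [|n IH] a y Py.
  by exists 0%N, a, y; split=> // -[].
have [m [a' [y' [a'_inj Py' sumy]]]] :=
  IH (fun i => a (lift ord0 i)) (fun i => y (lift ord0 i)) (fun i => Py _).
rewrite big_ord_recl sumy.
have [[j a'j]|a0_new] := classic (exists j, a' j = a ord0).
  exists m, a', (fun k => if k == j then y ord0 + y' k else y' k); split=> //.
    move=> k; case: eqP => [->|_]; last exact: Py'.
    by apply: Padd; [rewrite a'j; apply: Py | apply: Py'].
  rewrite [RHS](bigD1 j) //= eqxx -addrA [in LHS](bigD1 j) //=.
  by congr (_ + (_ + _)); apply: eq_bigr => k /negPf ->.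
exists m.+1, (ocons (a ord0) a'), (ocons (y ord0) y'); split.
- by apply: ocons_inj => // j a'j; apply: a0_new; exists j.
- by elim/ocons_ind => [|j]; rewrite ?ocons0 ?oconsS.
- by rewrite sum_ocons.
Qed.

Section LinearAxiom.
Variables (K : pzRingType) (U W : lmodType K) (f : U -> W).
Hypothesis f_lin : forall k x y, f (k *: x + y) = k *: f x + f y.

Lemma lin0 : f 0 = 0.
Proof.
have := f_lin 1 0 0; rewrite !scale1r addr0 => f0.
by apply: (addrI (f 0)); rewrite addr0 -f0.
Qed.

Lemma linD x y : f (x + y) = f x + f y.
Proof. by rewrite -{1}[x]scale1r f_lin scale1r. Qed.

Lemma linZ k x : f (k *: x) = k *: f x.
Proof. by rewrite -[k *: x]addr0 f_lin lin0 addr0. Qed.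

Lemma linN x : f (- x) = - f x.
Proof. by rewrite -scaleN1r linZ scaleN1r. Qed.

Lemma linB x y : f (x - y) = f x - f y.
Proof. by rewrite linD linN. Qed.

Lemma lin_sum I (r : seq I) (P : pred I) (F : I -> U) :
  f (\sum_(i <- r | P i) F i) = \sum_(i <- r | P i) f (F i).
Proof. exact: (big_morph f linD lin0). Qed.

End LinearAxiom.

Section Functionals.
Variables (R : realType) (H : vectType R[i]).
Implicit Types a b c : H -> R[i].

Lemma fnl_add_lin a b :
  is_lin_fnl a -> is_lin_fnl b -> is_lin_fnl (fnl_add a b).
Proof.
by move=> la lb k h1 h2; rewrite /fnl_add la lb mulrDr addrACA.
Qed.

Lemma fnl_add0 a : fnl_add a (@fnl0 R H) = a.
Proof. by apply: functional_extensionality => h; rewrite /fnl_add addr0. Qed.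

Lemma fnl_addN a : fnl_add a (fnl_opp a) = @fnl0 R H.
Proof. by apply: functional_extensionality => h; rewrite /fnl_add subrr. Qed.

Lemma fnl_oppK a : fnl_opp (fnl_opp a) = a.
Proof. by apply: functional_extensionality => h; rewrite /fnl_opp opprK. Qed.

Lemma fnl_opp0 : fnl_opp (@fnl0 R H) = @fnl0 R H.
Proof. by apply: functional_extensionality => h; rewrite /fnl_opp oppr0. Qed.

Lemma fnl_opp_eq0 a : fnl_opp a = @fnl0 R H -> a = @fnl0 R H.
Proof. by move=> a0; rewrite -[a]fnl_oppK a0 fnl_opp0. Qed.

Lemma fnl_add_eq0 a b : fnl_add a b = @fnl0 R H -> b = fnl_opp a.
Proof.
move=> ab0; apply: functional_extensionality => h.
by apply/eqP; rewrite -addr_eq0 addrC; apply/eqP; exact: (congr1 (@^~ h) ab0).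
Qed.

Lemma fnl_neq0 a : a <> @fnl0 R H -> exists h, a h <> 0.
Proof.
move=> a0; apply: NNPP => all0; apply: a0.
apply: functional_extensionality => h.
by apply: NNPP => ah0; apply: all0; exists h.
Qed.

End Functionals.

Lemma ge0_quadratic_lin_coef_eq0 (F : numFieldType) (p d : F) :
  d \is Num.real -> 0 < p ->
  (forall r, r \is Num.real -> 0 <= r ^+ 2 * p + 2 * r * d) -> d = 0.
Proof.
move=> d_real p_gt0 quad_ge0.
have p_real : p \is Num.real by apply: gtr0_real.
have := quad_ge0 (- d / p) (rpredM (rpredNr d_real) (rpredVr p_real)).
have -> : (- d / p) ^+ 2 * p + 2 * (- d / p) * d = - (d ^+ 2 / p).
  by field; rewrite gt_eqF.
rewrite oppr_ge0 => d2p_le0.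
have d2p_ge0 : 0 <= d ^+ 2 / p.
  by apply: divr_ge0; [rewrite -realEsqr | exact: ltW].
have : d ^+ 2 / p == 0 by rewrite eq_le d2p_le0 d2p_ge0.
by rewrite mulf_eq0 invr_eq0 (gt_eqF p_gt0) orbF sqrf_eq0 => /eqP.
Qed.

Lemma ler_norm_sum_mul (F : numDomainType) n (d m : 'I_n -> F) e :
  (forall j, `|d j| <= e) -> `|\sum_j d j * m j| <= e * \sum_j `|m j|.
Proof.
move=> d_le; rewrite mulr_sumr; apply: le_trans (ler_norm_sum _ _ _) _.
by apply: ler_sum => j _; rewrite normrM ler_wpM2r.
Qed.

Section ExtendedAffine.
Variable R : realType.
Local Notation C := R[i].
Variables (V : lmodType C) (br : V -> V -> V) (fm : V -> V -> C).
Variables (H : vectType C) (iota : H -> V).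
Hypothesis E_eala : is_EALA br fm iota (fun _ : V => True).
Local Notation weight := (weight_vec br iota (fun _ : V => True)).

Lemma br_linl k x y z : br (k *: x + y) z = k *: br x z + br y z.
Proof. by case: E_eala => [[_ [_ [_ bil _ _]]] _]; case: (bil k x y z). Qed.

Lemma br_linr k x y z : br z (k *: x + y) = k *: br z x + br z y.
Proof. by case: E_eala => [[_ [_ [_ bil _ _]]] _]; case: (bil k x y z). Qed.

Lemma brxx x : br x x = 0.
Proof. by case: E_eala => [[_ [_ [_ _ alt _]]] _]; apply: alt. Qed.

Lemma jacobi x y z : br x (br y z) + br y (br z x) + br z (br x y) = 0.
Proof. by case: E_eala => [[_ [_ [_ _ _ jac]]] _]; apply: jac. Qed.

Lemma br0l z : br 0 z = 0.
Proof. exact: (lin0 (f := br^~ z) (fun k x y => br_linl k x y z)). Qed.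
Lemma br0r z : br z 0 = 0.
Proof. exact: (lin0 (f := br z) (fun k x y => br_linr k x y z)). Qed.
Lemma brDl x y z : br (x + y) z = br x z + br y z.
Proof. exact: (linD (f := br^~ z) (fun k x y => br_linl k x y z)). Qed.
Lemma brDr x y z : br z (x + y) = br z x + br z y.
Proof. exact: (linD (f := br z) (fun k x y => br_linr k x y z)). Qed.
Lemma brZr k x z : br z (k *: x) = k *: br z x.
Proof. exact: (linZ (f := br z) (fun k x y => br_linr k x y z)). Qed.
Lemma brNr x z : br z (- x) = - br z x.
Proof. exact: (linN (f := br z) (fun k x y => br_linr k x y z)). Qed.
Lemma br_suml n (x : 'I_n -> V) z : br (\sum_i x i) z = \sum_i br (x i) z.
Proof. exact: (lin_sum (f := br^~ z) (fun k x y => br_linl k x y z)). Qed.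
Lemma br_sumr n (x : 'I_n -> V) z : br z (\sum_i x i) = \sum_i br z (x i).
Proof. exact: (lin_sum (f := br z) (fun k x y => br_linr k x y z)). Qed.

Lemma br_anti x y : br x y = - br y x.
Proof.
have := brxx (x + y); rewrite brDl !brDr !brxx add0r addr0.
by move/eqP; rewrite addr_eq0 => /eqP.
Qed.

Lemma fm_linl k x y z : fm (k *: x + y) z = k * fm x z + fm y z.
Proof. by case: E_eala => [_ [[lin _ _ _] _]]; apply: lin. Qed.

Lemma fmC x y : fm x y = fm y x.
Proof. by case: E_eala => [_ [[_ sym _ _] _]]; apply: sym. Qed.

Lemma fm_nondeg x : (forall y, fm x y = 0) -> x = 0.
Proof. by case: E_eala => [_ [[_ _ nd _] _]] x0; apply: nd. Qed.

Lemma fm_invariant x y z : fm (br x y) z = fm x (br y z).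
Proof. by case: E_eala => [_ [[_ _ _ inv] _]]; apply: inv. Qed.

Lemma fm_linr k x y z : fm z (k *: x + y) = k * fm z x + fm z y.
Proof. by rewrite fmC fm_linl (fmC x) (fmC y). Qed.

Lemma fm0l z : fm 0 z = 0.
Proof. exact: (@lin0 _ _ C^o (fm^~ z) (fun k x y => fm_linl k x y z)). Qed.
Lemma fm0r z : fm z 0 = 0.
Proof. exact: (@lin0 _ _ C^o (fm z) (fun k x y => fm_linr k x y z)). Qed.
Lemma fmDl x y z : fm (x + y) z = fm x z + fm y z.
Proof. exact: (@linD _ _ C^o (fm^~ z) (fun k x y => fm_linl k x y z)). Qed.
Lemma fmDr x y z : fm z (x + y) = fm z x + fm z y.
Proof. exact: (@linD _ _ C^o (fm z) (fun k x y => fm_linr k x y z)). Qed.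
Lemma fmZl k x z : fm (k *: x) z = k * fm x z.
Proof. exact: (@linZ _ _ C^o (fm^~ z) (fun k x y => fm_linl k x y z)). Qed.
Lemma fmZr k x z : fm z (k *: x) = k * fm z x.
Proof. exact: (@linZ _ _ C^o (fm z) (fun k x y => fm_linr k x y z)). Qed.
Lemma fmNl x z : fm (- x) z = - fm x z.
Proof. exact: (@linN _ _ C^o (fm^~ z) (fun k x y => fm_linl k x y z)). Qed.
Lemma fmNr x z : fm z (- x) = - fm z x.
Proof. exact: (@linN _ _ C^o (fm z) (fun k x y => fm_linr k x y z)). Qed.
Lemma fmBl x y z : fm (x - y) z = fm x z - fm y z.
Proof. exact: (@linB _ _ C^o (fm^~ z) (fun k x y => fm_linl k x y z)). Qed.
Lemma fmBr x y z : fm z (x - y) = fm z x - fm z y.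
Proof. exact: (@linB _ _ C^o (fm z) (fun k x y => fm_linr k x y z)). Qed.
Lemma fm_suml I (r : seq I) (P : pred I) (x : I -> V) z :
  fm (\sum_(i <- r | P i) x i) z = \sum_(i <- r | P i) fm (x i) z.
Proof. exact: (@lin_sum _ _ C^o (fm^~ z) (fun k x y => fm_linl k x y z)). Qed.
Lemma fm_sumr I (r : seq I) (P : pred I) (x : I -> V) z :
  fm z (\sum_(i <- r | P i) x i) = \sum_(i <- r | P i) fm z (x i).
Proof. exact: (@lin_sum _ _ C^o (fm z) (fun k x y => fm_linr k x y z)). Qed.

Lemma iota_lin k h1 h2 : iota (k *: h1 + h2) = k *: iota h1 + iota h2.
Proof. by case: E_eala => [_ [_ [[lin _] _ _ _]]]; apply: lin. Qed.

Lemma iota_inj : injective iota.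
Proof. by case: E_eala => [_ [_ [[_ [inj _]] _ _ _]]]. Qed.

Lemma iota0 : iota 0 = 0.
Proof. exact: (lin0 iota_lin). Qed.
Lemma iotaD h1 h2 : iota (h1 + h2) = iota h1 + iota h2.
Proof. exact: (linD iota_lin). Qed.
Lemma iotaZ k h : iota (k *: h) = k *: iota h.
Proof. exact: (linZ iota_lin). Qed.
Lemma iotaB h1 h2 : iota (h1 - h2) = iota h1 - iota h2.
Proof. exact: (linB iota_lin). Qed.

Lemma iota_eq0 h : iota h = 0 -> h = 0.
Proof. by rewrite -iota0 => /iota_inj. Qed.

Lemma weight_decomp x : exists n (a : 'I_n -> H -> C) (y : 'I_n -> V),
  [/\ injective a, forall i, is_lin_fnl (a i) /\ weight (a i) (y i)
    & x = \sum_i y i].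
Proof.
case: E_eala => [_ [_ [[_ [_ [_ _ dec _ _]]] _ _ _]]].
by have [n [a [y [? [? ?]]]]] := dec x I; exists n, a, y.
Qed.

Lemma weight_indep n (a : 'I_n -> H -> C) (y : 'I_n -> V) :
  injective a -> (forall i, is_lin_fnl (a i) /\ weight (a i) (y i)) ->
  \sum_i y i = 0 -> forall i, y i = 0.
Proof.
by case: E_eala => [_ [_ [[_ [_ [_ _ _ indep _]]] _ _ _]]]; apply: indep.
Qed.

Lemma weight0E x : weight (@fnl0 R H) x <-> exists h, x = iota h.
Proof.
by case: E_eala => [_ [_ [[_ [_ [_ _ _ _ cartan]]] _ _ _]]]; apply: cartan.
Qed.

Lemma ad_nilpotent a x y : root_set br iota (fun _ : V => True) a ->
  nonisotropic fm iota a -> weight a x -> exists n, iter n (br x) y = 0.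
Proof.
by case: E_eala => [_ [_ [_ ea3 _ _]]] ra na wx; apply: ea3 ra na wx y I.
Qed.

Lemma weight_iota h : weight (@fnl0 R H) (iota h).
Proof. by apply/weight0E; exists h. Qed.

Lemma br_iota_iota h1 h2 : br (iota h1) (iota h2) = 0.
Proof. by have [_ ->] := weight_iota h2; rewrite scale0r. Qed.

Lemma weight_vec0 a : weight a 0.
Proof. by split=> // h; rewrite br0r scaler0. Qed.

Lemma weight_vecD a x y : weight a x -> weight a y -> weight a (x + y).
Proof. by move=> [_ wx] [_ wy]; split=> // h; rewrite brDr wx wy scalerDr. Qed.

Lemma weight_vecZ a k x : weight a x -> weight a (k *: x).
Proof. by move=> [_ wx]; split=> // h; rewrite brZr wx !scalerA mulrC. Qed.

Lemma weight_vec_br a b x y :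
  weight a x -> weight b y -> weight (fnl_add a b) (br x y).
Proof.
move=> [_ wx] [_ wy]; split=> // h.
have := jacobi (iota h) x y.
rewrite (br_anti y (iota h)) wy wx brNr !brZr (br_anti y x) scalerN.
rewrite /fnl_add scalerDl.
by move/eqP; rewrite -addrA addr_eq0 => /eqP ->; rewrite opprD !opprK addrC.
Qed.

Lemma fm_weight_orth a b x y :
  weight a x -> weight b y -> fnl_add a b <> @fnl0 R H -> fm x y = 0.
Proof.
move=> [_ wx] [_ wy] /fnl_neq0 [h abh].
have ab_fm : a h * fm x y = - (b h * fm x y).
  by rewrite -fmZl -wx br_anti fmNl fm_invariant wy fmZr.
have : (a h + b h) * fm x y = 0 by rewrite mulrDl ab_fm addNr.
by move/eqP; rewrite mulf_eq0 => /orP[/eqP abh0|/eqP //]; case: abh.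
Qed.

Lemma fm_sum_weight n (a : 'I_n -> H -> C) (y : 'I_n -> V) c z j :
  injective a -> (forall i, weight (a i) (y i)) -> weight c z ->
  fnl_add (a j) c = @fnl0 R H -> fm (\sum_i y i) z = fm (y j) z.
Proof.
move=> a_inj wy wz ajc; rewrite fm_suml (bigD1 j) //= big1 ?addr0 // => i ij.
apply: fm_weight_orth (wy i) wz _ => aic; move/eqP: ij; apply; apply: a_inj.
by rewrite -[a i]fnl_oppK -(fnl_add_eq0 aic) (fnl_add_eq0 ajc) fnl_oppK.
Qed.

Lemma weight_nondeg a x :
  weight a x -> (forall z, weight (fnl_opp a) z -> fm x z = 0) -> x = 0.
Proof.
move=> wx xz0; apply: fm_nondeg => v.
have [n [c [w [_ cw ->]]]] := weight_decomp v.
rewrite fm_sumr big1 // => k _; have [_ wk] := cw k.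
have [ck|ck] := classic (c k = fnl_opp a); first by apply: xz0; rewrite -ck.
by apply: fm_weight_orth wx wk _ => /fnl_add_eq0.
Qed.

Lemma iota_nondeg h : (forall h', fm (iota h) (iota h') = 0) -> h = 0.
Proof.
move=> hh'; apply/iota_eq0/(weight_nondeg (weight_iota h)) => z.
by rewrite fnl_opp0 => /weight0E [h' ->].
Qed.

Lemma weight_components n (a : 'I_n -> H -> C) (y : 'I_n -> V) h c :
  injective a -> (forall i, is_lin_fnl (a i) /\ weight (a i) (y i)) ->
  br (iota h) (\sum_i y i) = c *: \sum_i y i ->
  forall i, (a i h - c) *: y i = 0.
Proof.
move=> a_inj ay hy; apply: weight_indep a_inj _ _.
  by move=> i; have [la wy] := ay i; split=> //; apply: weight_vecZ.
rewrite (eq_bigr (fun i => br (iota h) (y i) - c *: y i)); last first.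
  by move=> i _; rewrite scalerBl; have [_ [_ ->]] := ay i.
by rewrite sumrB -br_sumr hy scaler_sumr subrr.
Qed.

Lemma br_weight_opp a b x y t : weight a x -> weight b y ->
  fnl_add a b = @fnl0 R H -> is_tvec fm iota a t -> br x y = fm x y *: iota t.
Proof.
move=> wx wy ab0 ta.
have /weight0E [h brh] : weight (@fnl0 R H) (br x y).
  by rewrite -ab0; apply: weight_vec_br.
rewrite brh -iotaZ; congr iota; apply/subr0_eq/iota_nondeg => h'.
rewrite iotaB fmBl iotaZ fmZl -brh fm_invariant br_anti (proj2 wy) fmNr fmZr.
rewrite (fnl_add_eq0 ab0) (fmC (iota t)) -ta /fnl_opp.
by rewrite mulNr opprK mulrC subrr.
Qed.

Lemma riesz_repr (W : vectType C) (j : W -> V)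
  (j_lin : forall k w1 w2, j (k *: w1 + w2) = k *: j w1 + j w2)
  (j_nondeg : forall w, (forall w', fm (j w) (j w') = 0) -> w = 0)
  (b : W -> C) : is_lin_fnl b -> exists t, forall w, b w = fm (j w) (j t).
Proof.
move=> b_lin; pose n := \dim {:W}; pose e := vbasis {:W}.
pose G : 'M[C]_n := \matrix_(k, l) fm (j e`_k) (j e`_l).
pose comb (c : 'rV[C]_n) := \sum_(k < n) c 0 k *: e`_k.
have GE c l : (c *m G) 0 l = fm (j (comb c)) (j e`_l).
  rewrite !mxE /comb (lin_sum j_lin) fm_suml; apply: eq_bigr => k _.
  by rewrite (linZ j_lin) fmZl mxE.
have expand w : w = \sum_(l < n) coord e l w *: e`_l := coord_vbasis (memvf w).
have G_free : row_free G.
  rewrite -kermx_eq0; apply/eqP/row_matrixP => i; rewrite row0.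
  set c := row i _; have /j_nondeg c0 : forall w', fm (j (comb c)) (j w') = 0.
    move: (comb c) (GE c) => s GEs w'.
    rewrite (expand w') (lin_sum j_lin) fm_sumr big1 // => l _.
    by rewrite (linZ j_lin) fmZr -GEs -row_mul mulmx_ker row0 mxE mulr0.
  apply/rowP => k; rewrite [RHS]mxE.
  by have := freeP (basis_free (vbasisP {:W})) (fun k => c 0 k) c0 k.
have G_unit : G \in unitmx by rewrite -row_free_unit.
pose c := (\row_l b e`_l) *m invmx G.
have GEc (l : 'I_n) : b e`_l = fm (j (comb c)) (j e`_l).
  by rewrite -GE mulmxKV // mxE.
exists (comb c) => w; move: (comb c) GEc => t GEt.
rewrite fmC {1 2}(expand w) (@lin_sum _ _ C^o _ b_lin) (lin_sum j_lin) fm_sumr.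
apply: eq_bigr => l _.
by rewrite (@linZ _ _ C^o _ b_lin) (linZ j_lin) fmZr -GEt.
Qed.

Lemma tvec_unique a t1 t2 :
  is_tvec fm iota a t1 -> is_tvec fm iota a t2 -> t1 = t2.
Proof.
move=> t1a t2a; apply/subr0_eq/iota_nondeg => h.
by rewrite fmC iotaB fmBr -t1a -t2a subrr.
Qed.

Lemma tvec_exists a : is_lin_fnl a -> exists t, is_tvec fm iota a t.
Proof. exact: riesz_repr iota_lin iota_nondeg a. Qed.

Lemma tvec_comb a b ta tb r : is_tvec fm iota a ta -> is_tvec fm iota b tb ->
  is_tvec fm iota (fun h => r * a h + b h) (r *: ta + tb).
Proof. by move=> a_ta b_tb h; rewrite iota_lin fm_linr -a_ta -b_tb. Qed.

Lemma fnl_formE a b ta tb c : is_tvec fm iota a ta -> is_tvec fm iota b tb ->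
  fnl_form fm iota a b c <-> c = fm (iota ta) (iota tb).
Proof.
move=> ta_a tb_b.
split=> [[ta' [tb' [ta'_a [tb'_b <-]]]]|->]; last by exists ta, tb.
by rewrite (tvec_unique ta'_a ta_a) (tvec_unique tb'_b tb_b).
Qed.

Lemma nonisotropicE a ta : is_tvec fm iota a ta ->
  nonisotropic fm iota a <-> fm (iota ta) (iota ta) <> 0.
Proof.
move=> ta_a; split=> [[c [/(fnl_formE _ ta_a ta_a) -> //]]|c0].
by exists (fm (iota ta) (iota ta)); split=> //; apply/(fnl_formE _ ta_a ta_a).
Qed.

Section Subsystem.
Variable R' : fnl_set H.
Hypothesis R'_closed_sub :
  is_closed_subsystem fm iota R' (root_set br iota (fun _ : V => True)).

Lemma R'_sub a : R' a -> root_set br iota (fun _ : V => True) a.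
Proof. by case: R'_closed_sub => [[sub _] _]; apply: sub. Qed.

Lemma R'_lin a : R' a -> is_lin_fnl a.
Proof. by case/R'_sub. Qed.

Lemma R'0 : R' (@fnl0 R H).
Proof. by case: R'_closed_sub => [[_ [_ [R'0 _]]] _]. Qed.

Lemma R'_opp a : R' a -> R' (fnl_opp a).
Proof. by case: R'_closed_sub => [[_ [_ [_ [opp _]]]] _]; apply: opp. Qed.

Lemma R'_discrete : discrete_set R'.
Proof. by case: R'_closed_sub => [[_ [_ [_ [_ [_ [disc _]]]]]] _]. Qed.

Lemma R'_form_real a b c : in_real_span R' a -> in_real_span R' b ->
  fnl_form fm iota a b c -> c \is Num.real.
Proof.
case: R'_closed_sub => [[_ [_ [_ [_ [_ [_ [real _ _ _]]]]]]] _] Sa Sb abc.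
by case: (real a b c Sa Sb abc).
Qed.

Lemma R'_form_ge0 a c : in_real_span R' a -> fnl_form fm iota a a c -> 0 <= c.
Proof.
by case: R'_closed_sub => [[_ [_ [_ [_ [_ [_ [_ psd _ _]]]]]]] _]; apply: psd.
Qed.

Lemma R'_nonisolated : isotropic_nonisolated fm iota R'.
Proof.
by case: R'_closed_sub => [[_ [_ [_ [_ [_ [_ [_ _ _ [noniso _]]]]]]]] _].
Qed.

Lemma R'_connected : connected_nonisotropic fm iota R'.
Proof.
by case: R'_closed_sub => [[_ [_ [_ [_ [_ [_ [_ _ _ [_ conn]]]]]]]] _].
Qed.

Lemma R'_closed a b : R' a -> R' b ->
  root_set br iota (fun _ : V => True) (fnl_add a b) -> R' (fnl_add a b).
Proof. by case: R'_closed_sub => [_ add_closed]; apply: add_closed. Qed.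

Lemma real_span1 a : R' a -> in_real_span R' a.
Proof.
move=> Ra; exists 1%N, (fun _ => a), (fun _ => 1).
split=> [i|]; first by rewrite rpred1.
by apply: functional_extensionality => h; rewrite big_ord1 mul1r.
Qed.

Lemma real_span_comb a b r : R' a -> R' b -> r \is Num.real ->
  in_real_span R' (fun h => r * a h + b h).
Proof.
move=> Ra Rb r_real.
exists 2%N, (fun i : 'I_2 => if val i == 0%N then a else b),
  (fun i : 'I_2 => if val i == 0%N then r else 1); split.
  by move=> i; case: ifP => _; rewrite ?rpred1.
apply: functional_extensionality => h.
by rewrite !big_ord_recl big_ord0 /= mul1r addr0.
Qed.

Lemma R'_isotropic_orth s a ts ta : R' s -> R' a ->
  is_tvec fm iota s ts -> is_tvec fm iota a ta ->
  fm (iota ts) (iota ts) = 0 -> fm (iota ta) (iota ta) <> 0 ->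
  fm (iota ta) (iota ts) = 0.
Proof.
move=> Rs Ra s_ts a_ta ss0 aa0.
have aa_ge0 : 0 <= fm (iota ta) (iota ta).
  by apply: (R'_form_ge0 (real_span1 Ra)); apply/(fnl_formE _ a_ta a_ta).
have as_real : fm (iota ta) (iota ts) \is Num.real.
  apply: (R'_form_real (real_span1 Ra) (real_span1 Rs)).
  exact/(fnl_formE _ a_ta s_ts).
apply: (ge0_quadratic_lin_coef_eq0 (p := fm (iota ta) (iota ta)) as_real).
  by rewrite lt0r aa_ge0 andbT; apply/eqP.
move=> r r_real; have ra_s := tvec_comb r a_ta s_ts.
have := R'_form_ge0 (real_span_comb Ra Rs r_real)
  (iffRL (fnl_formE _ ra_s ra_s) erefl).
rewrite iota_lin fm_linl !fm_linr ss0 addr0 (fmC (iota ts)).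
by congr (0 <= _); ring.
Qed.

Section Cover.
Variables (K : vectType C) (kap : K -> H).
Hypothesis kap_lin : forall k u1 u2, kap (k *: u1 + u2) = k *: kap u1 + kap u2.
Hypothesis kap_inj : injective kap.
Hypothesis tvec_in_K : forall a t, R' a -> nonisotropic fm iota a ->
  is_tvec fm iota a t -> exists u, t = kap u.
Hypothesis K_nondeg :
  forall u, (forall u', fm (iota (kap u)) (iota (kap u')) = 0) -> u = 0.
Local Notation iota' := (fun u => iota (kap u)).

Lemma iota'_lin k u1 u2 :
  iota (kap (k *: u1 + u2)) = k *: iota (kap u1) + iota (kap u2).
Proof. by rewrite kap_lin iota_lin. Qed.

Lemma iota'_inj : injective iota'.
Proof. by move=> u1 u2 /iota_inj /kap_inj. Qed.

Lemma R'_tvec_in_K a : R' a -> exists u, is_tvec fm iota a (kap u).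
Proof.
move=> Ra; have [ta a_ta] := tvec_exists (R'_lin Ra).
have [na|iso] := classic (nonisotropic fm iota a).
  by have [u ta_u] := tvec_in_K Ra na a_ta; exists u; rewrite -ta_u.
have [b [Rb [nb Rba]]] := R'_nonisolated Ra iso.
have [tb b_tb] := tvec_exists (R'_lin Rb).
have aa0 : fm (iota ta) (iota ta) = 0 by apply: NNPP => /(nonisotropicE a_ta).
have bb0 := iffLR (nonisotropicE b_tb) nb.
have ba0 := R'_isotropic_orth Ra Rb a_ta b_tb aa0 bb0.
have ba_t : is_tvec fm iota (fnl_add b a) (tb + ta).
  by move=> h; rewrite /fnl_add iotaD fmDr -b_tb -a_ta.
have nba : nonisotropic fm iota (fnl_add b a).
  apply/(nonisotropicE ba_t).
  by rewrite iotaD !fmDl !fmDr aa0 ba0 (fmC (iota ta)) ba0 !addr0.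
have [u1 ba_u1] := tvec_in_K Rba nba ba_t.
have [u2 b_u2] := tvec_in_K Rb nb b_tb.
by exists (u1 - u2); rewrite (linB kap_lin) -ba_u1 -b_u2 addrC addKr.
Qed.

(* The t-vector of b with respect to the form on K; junk unless b is linear. *)
Definition tK (b : K -> C) : K := epsilon (inhabits 0) (is_tvec fm iota' b).

Lemma tK_spec b : is_lin_fnl b -> is_tvec fm iota' b (tK b).
Proof.
move=> b_lin; apply: epsilon_spec.
exact: (riesz_repr (j := iota') iota'_lin K_nondeg b_lin).
Qed.

Lemma tK_eq b t : is_tvec fm iota' b t -> tK b = t.
Proof.
move=> b_t; have b_tK := epsilon_spec (inhabits 0) _ (ex_intro _ t b_t).
apply/subr0_eq/K_nondeg => u.
by rewrite fmC (linB kap_lin) iotaB fmBr -b_tK -b_t subrr.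
Qed.

Definition fnl_res (a : H -> C) : K -> C := fun u => a (kap u).
Definition fnl_ext (b : K -> C) : H -> C :=
  fun h => fm (iota h) (iota (kap (tK b))).

Lemma fnl_res_lin a : is_lin_fnl a -> is_lin_fnl (fnl_res a).
Proof. by move=> a_lin k u1 u2; rewrite /fnl_res kap_lin a_lin. Qed.

Lemma fnl_ext_lin b : is_lin_fnl (fnl_ext b).
Proof. by move=> k h1 h2; rewrite /fnl_ext iota_lin fm_linl. Qed.

Lemma fnl_extK b : is_lin_fnl b -> fnl_res (fnl_ext b) = b.
Proof.
move=> b_lin; apply: functional_extensionality => u.
by rewrite /fnl_res /fnl_ext -(tK_spec b_lin).
Qed.

Lemma fnl_resK_tvec a u : is_tvec fm iota a (kap u) -> fnl_ext (fnl_res a) = a.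
Proof.
move=> a_u; have tKa : tK (fnl_res a) = u by apply: tK_eq => u'; exact: a_u.
by apply: functional_extensionality => h; rewrite /fnl_ext tKa a_u.
Qed.

Lemma fnl_resK a : R' a -> fnl_ext (fnl_res a) = a.
Proof. by case/R'_tvec_in_K => u; apply: fnl_resK_tvec. Qed.

Lemma R'_tvec_tK a : R' a -> is_tvec fm iota a (kap (tK (fnl_res a))).
Proof. by move=> Ra; rewrite -{1}(fnl_resK Ra). Qed.

Lemma fnl_res_inj a a' : R' a -> R' a' -> fnl_res a = fnl_res a' -> a = a'.
Proof. by move=> Ra Ra' aa'; rewrite -(fnl_resK Ra) -(fnl_resK Ra') aa'. Qed.

Variable Hp : H -> Prop.
Hypothesis HpE : forall h, Hp h <-> exists u, h = kap u.
Local Notation Ecov := (lie_cover br iota R' Hp).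

(* The summands of an element of the Lie cover: the one of weight zero must
   come from K, not merely from H. *)
Definition cover_root_vec (a : H -> C) (y : V) : Prop :=
  [/\ R' a, weight a y & a = @fnl0 R H -> exists u, y = iota (kap u)].

Lemma cover_iota u : Ecov (iota (kap u)).
Proof.
exists (kap u), 0%N, (fun _ => @fnl0 R H), (fun _ => 0).
by split; [apply/HpE; exists u | split; [case | rewrite big_ord0 addr0]].
Qed.

Lemma cover0 : Ecov 0.
Proof. by rewrite -iota0 -(lin0 kap_lin); apply: cover_iota. Qed.

Lemma cover_weight a y : R' a -> a <> @fnl0 R H -> weight a y -> Ecov y.
Proof.
move=> Ra a0 wy; exists 0, 1%N, (fun _ => a), (fun _ => y).
split; first by apply/HpE; exists 0; rewrite (lin0 kap_lin).
by split=> //; rewrite iota0 add0r big_ord1.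
Qed.

Lemma cover_root_vec_mem a y : cover_root_vec a y -> Ecov y.
Proof.
case=> Ra wy yK; have [a0|a0] := classic (a = @fnl0 R H).
  by have [u ->] := yK a0; apply: cover_iota.
exact: cover_weight wy.
Qed.

Lemma cover_add_weight x a y :
  Ecov x -> R' a -> a <> @fnl0 R H -> weight a y -> Ecov (x + y).
Proof.
move=> [h [n [b [z [Hph [bz ->]]]]]] Ra a0 wy.
exists h, n.+1, (ocons a b), (ocons y z); split=> //; split.
  by elim/ocons_ind => [|j]; rewrite ?ocons0 ?oconsS.
by rewrite sum_ocons addrCA addrC.
Qed.

Lemma cover_add_iota x u : Ecov x -> Ecov (x + iota (kap u)).
Proof.
move=> [h [n [b [z [Hph [bz ->]]]]]]; have [u0 ->] := iffLR (HpE h) Hph.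
exists (kap (u0 + u)), n, b, z; split; first by apply/HpE; exists (u0 + u).
by split=> //; rewrite (linD kap_lin) iotaD addrAC.
Qed.

Lemma coverD x y : Ecov x -> Ecov y -> Ecov (x + y).
Proof.
move=> Ex [h [n [a [z [Hph [az ->]]]]]]; have [u ->] := iffLR (HpE h) Hph.
rewrite addrA; elim: n a z az => [|n IH] a z az.
  by rewrite big_ord0 addr0; apply: cover_add_iota.
rewrite big_ord_recr addrA /=; have [Ra [a0 wz]] := az ord_max.
apply: cover_add_weight wz => //.
by apply: (IH (fun i => a (widen_ord _ i)) (fun i => z (widen_ord _ i))) => i.
Qed.

Lemma coverZ k x : Ecov x -> Ecov (k *: x).
Proof.
move=> [h [n [a [z [Hph [az ->]]]]]]; have [u ->] := iffLR (HpE h) Hph.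
exists (kap (k *: u)), n, a, (fun i => k *: z i).
split; first by apply/HpE; exists (k *: u).
split=> [i|].
  by have [Ra [a0 wz]] := az i; do 2!split=> //; exact: weight_vecZ.
by rewrite scalerDr scaler_sumr (linZ kap_lin) iotaZ.
Qed.

Lemma cover_sum n (x : 'I_n -> V) : (forall i, Ecov (x i)) -> Ecov (\sum_i x i).
Proof.
by move=> Ex; elim/big_ind: _ => //; [exact: cover0 | exact: coverD].
Qed.

Lemma cover_decomp x : Ecov x -> exists n (a : 'I_n -> H -> C) (y : 'I_n -> V),
  [/\ injective a, forall i, cover_root_vec (a i) (y i) & x = \sum_i y i].
Proof.
move=> [h [n [a [y [Hph [ay ->]]]]]]; have [u ->] := iffLR (HpE h) Hph.
have root_vecD b y1 y2 : cover_root_vec b y1 -> cover_root_vec b y2 ->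
    cover_root_vec b (y1 + y2).
  move=> [Rb w1 y1K] [_ w2 y2K]; split=> //; first exact: weight_vecD.
  move=> b0; have [u1 ->] := y1K b0; have [u2 ->] := y2K b0.
  by exists (u1 + u2); rewrite (linD kap_lin) iotaD.
have [|m [a' [y' [a'_inj a'y' sum_y]]]] := sum_regroup_distinct root_vecD
    (a := ocons (@fnl0 R H) a) (y := ocons (iota (kap u)) y).
  elim/ocons_ind => [|j]; rewrite ?ocons0 ?oconsS.
    by split; [exact: R'0 | exact: weight_iota | exists u].
  by have [Ra [a0 wy]] := ay j; split.
by exists m, a', y'; rewrite -sum_y sum_ocons.
Qed.

Lemma cover_br_root_vec a b x y :
  cover_root_vec a x -> cover_root_vec b y -> Ecov (br x y).
Proof.
move=> [Ra wx xK] [Rb wy yK].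
have [a0|a_nz] := classic (a = @fnl0 R H).
  have [u ->] := xK a0; have [_ ->] := wy.
  by apply/coverZ/(cover_root_vec_mem (a := b)).
have [ab0|ab_nz] := classic (fnl_add a b = @fnl0 R H).
  have [u a_u] := R'_tvec_in_K Ra.
  rewrite (br_weight_opp wx wy ab0 a_u) -iotaZ -(linZ kap_lin).
  exact: cover_iota.
have [ab_root|ab_nroot] :=
  classic (root_set br iota (fun _ : V => True) (fnl_add a b)).
  exact: cover_weight (R'_closed Ra Rb ab_root) ab_nz (weight_vec_br wx wy).
suff -> : br x y = 0 by exact: cover0.
apply: NNPP => xy0; apply: ab_nroot.
split; first exact: fnl_add_lin (R'_lin Ra) (R'_lin Rb).
by exists (br x y); split=> //; apply: weight_vec_br.
Qed.

Lemma cover_br x y : Ecov x -> Ecov y -> Ecov (br x y).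
Proof.
move=> /cover_decomp [n [a [x' [_ ax' ->]]]].
move=> /cover_decomp [m [b [y' [_ by' ->]]]].
rewrite br_suml; apply: cover_sum => i; rewrite br_sumr; apply: cover_sum => j.
exact: cover_br_root_vec (ax' i) (by' j).
Qed.

Lemma cover_weight_vec x b : Ecov x -> x <> 0 ->
  (forall u, br (iota (kap u)) x = b u *: x) ->
  exists2 a, b = fnl_res a & cover_root_vec a x.
Proof.
move=> /cover_decomp [n [a [y [a_inj ay ->]]]] x0 bx.
have comp u i : (a i (kap u) - b u) *: y i = 0.
  apply: (weight_components a_inj _ (bx u)) => j.
  by have [Raj wj _] := ay j; split=> //; exact: R'_lin.
have b_res i : y i <> 0 -> b = fnl_res (a i).
  move=> yi0; apply: functional_extensionality => u; have /eqP := comp u i.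
  by rewrite scaler_eq0 subr_eq0 => /orP[/eqP //|/eqP yi0']; case: yi0.
have [i yi0] : exists i, y i <> 0.
  apply: NNPP => y0; apply: x0; rewrite big1 // => i _.
  by apply: NNPP => yi0; apply: y0; exists i.
have -> : \sum_j y j = y i.
  rewrite (bigD1 i) //= big1 ?addr0 // => k ki; apply: NNPP => yk0.
  have [[Rai _ _] [Rak _ _]] := (ay i, ay k).
  move/eqP: ki; apply; apply/a_inj/fnl_res_inj => //.
  by rewrite -(b_res k yk0) -(b_res i yi0).
by exists (a i); [exact: b_res | exact: ay].
Qed.

Lemma cover_weight_ext x b : Ecov x ->
  (forall u, br (iota (kap u)) x = b u *: x) -> weight (fnl_ext b) x.
Proof.
move=> Ex bx; have [->|x0] := classic (x = 0); first exact: weight_vec0.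
by have [a -> [Ra wx _]] := cover_weight_vec Ex x0 bx; rewrite fnl_resK.
Qed.

Lemma cover_lie : is_lie_subalgebra br Ecov.
Proof.
split; first exact: cover0.
split; first by move=> k x y Ex Ey; apply: coverD (coverZ k Ex) Ey.
split=> [x y|k x y z _ _ _|x _|x y z _ _ _].
- exact: cover_br.
- by split; [apply: br_linl | apply: br_linr].
- exact: brxx.
- exact: jacobi.
Qed.

(* Each summand of x pairs nontrivially only with the opposite root space,
   which lies in the cover (or, for the zero root, with iota (kap K)). *)
Lemma cover_fm_nondeg x : Ecov x -> (forall y, Ecov y -> fm x y = 0) -> x = 0.
Proof.
move=> Ex x_orth; have [n [a [y [a_inj ay x_sum]]]] := cover_decomp Ex; subst x.
have wy i : weight (a i) (y i) by have [] := ay i.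
rewrite big1 // => i _; have [Ra _ yK] := ay i.
have [a0|a_nz] := classic (a i = @fnl0 R H).
  have [u yu] := yK a0; suff u0 : u = 0 by rewrite yu u0 (lin0 kap_lin) iota0.
  apply: K_nondeg => u'; rewrite -yu -(fm_sum_weight a_inj wy (weight_iota _)).
    by apply: x_orth; apply: cover_iota.
  by rewrite a0 fnl_add0.
apply: weight_nondeg (wy i) _ => z wz.
rewrite -(fm_sum_weight a_inj wy wz (fnl_addN _)); apply: x_orth.
exact: cover_weight (R'_opp Ra) (fun a0 => a_nz (fnl_opp_eq0 a0)) wz.
Qed.

Lemma cover_EA1 : EA1 br fm Ecov.
Proof.
split=> [k x y z _ _ _|x y _ _|x|x y z _ _ _].
- exact: fm_linl.
- exact: fmC.
- exact: cover_fm_nondeg.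
- exact: fm_invariant.
Qed.

Lemma cover_EA2 : EA2 br iota' Ecov.
Proof.
split; first exact: iota'_lin.
split; first exact: iota'_inj.
split.
- exact: cover_iota.
- by move=> u1 u2; exists 0; rewrite (lin0 kap_lin) iota0 br_iota_iota.
- move=> x /cover_decomp [n [a [y [a_inj ay ->]]]].
  exists n, (fun i => fnl_res (a i)), y; split=> [i j|]; last split=> // i.
    have [[Rai _ _] [Raj _ _]] := (ay i, ay j).
    by move/(fnl_res_inj Rai Raj)/a_inj.
  have [Ra wy _] := ay i; split; first exact: fnl_res_lin (R'_lin Ra).
  by split; [exact: cover_root_vec_mem (ay i) | move=> u; apply: (proj2 wy)].
- move=> n b z b_inj bz; apply: (weight_indep (a := fun i => fnl_ext (b i))).
    move=> i j /(congr1 fnl_res); have [[bi_lin _] [bj_lin _]] := (bz i, bz j).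
    by rewrite /= !fnl_extK // => /b_inj.
  move=> i; have [_ [Ez bz_i]] := bz i.
  by split; [exact: fnl_ext_lin | exact: cover_weight_ext].
- move=> x; split=> [[Ex bx]|[u ->]]; last first.
    by split; [exact: cover_iota | move=> u'; rewrite br_iota_iota scale0r].
  have [->|x0] := classic (x = 0).
    by exists 0; rewrite (lin0 kap_lin) iota0.
  have [a b0 [Ra _ xK]] := cover_weight_vec Ex x0 bx; apply: xK.
  by rewrite -(fnl_resK Ra) -b0; exact: fnl_resK R'0.
Qed.

Lemma fnl_form_res a a' c : R' a -> R' a' ->
  fnl_form fm iota' (fnl_res a) (fnl_res a') c <-> fnl_form fm iota a a' c.
Proof.
move=> Ra Ra'; rewrite (fnl_formE _ (R'_tvec_tK Ra) (R'_tvec_tK Ra')).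
split=> [[t [t' [a_t [a'_t' <-]]]]|->].
  by rewrite (tK_eq a_t) (tK_eq a'_t').
exists (tK (fnl_res a)), (tK (fnl_res a')).
by split; [|split] => // u; apply: R'_tvec_tK.
Qed.

Lemma nonisotropic_res a : R' a ->
  nonisotropic fm iota' (fnl_res a) <-> nonisotropic fm iota a.
Proof.
by move=> Ra; split=> -[c [ac c0]]; exists c; split=> //;
  apply/(fnl_form_res _ Ra Ra).
Qed.

Lemma cover_EA3 : EA3 br fm iota' Ecov.
Proof.
move=> b x _ nb [Ex bx] y _.
have [->|x0] := classic (x = 0); first by exists 1%N; rewrite /= br0l.
have [a b_a [Ra wx _]] := cover_weight_vec Ex x0 bx.
apply: (ad_nilpotent _ _ _ wx).
  by split; [exact: R'_lin Ra | exists x].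
by apply/(nonisotropic_res Ra); rewrite -b_a.
Qed.

Lemma cover_nontrivial : exists u, iota (kap u) <> 0.
Proof.
have iso0 : ~ nonisotropic fm iota (@fnl0 R H).
  have tvec0 : is_tvec fm iota (@fnl0 R H) 0 by move=> h; rewrite iota0 fm0r.
  by move/(nonisotropicE tvec0); rewrite iota0 fm0l.
have [a [Ra [na _]]] := R'_nonisolated R'0 iso0.
have [u a_u] := R'_tvec_in_K Ra.
by exists u => u0; apply: (iffLR (nonisotropicE a_u) na); rewrite u0 fm0l.
Qed.

Lemma cover_roots b :
  root_set br iota' Ecov b <-> exists a, R' a /\ b = fnl_res a.
Proof.
split=> [[b_lin [x [[Ex bx] x0]]]|[a [Ra ->]]].
  by have [a -> [Ra _ _]] := cover_weight_vec Ex x0 bx; exists a.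
split; first exact: fnl_res_lin (R'_lin Ra).
have [a0|a_nz] := classic (a = @fnl0 R H).
  have [u u0] := cover_nontrivial; exists (iota (kap u)); split=> //.
  split=> [|u']; first exact: cover_iota.
  by rewrite br_iota_iota /fnl_res a0 /fnl0 scale0r.
have [_ [x [[_ wx] x0]]] := R'_sub Ra.
exists x; split=> //; split=> [|u]; last exact: wx.
exact: cover_weight Ra a_nz (conj I wx).
Qed.

Local Notation eK := (vbasis {:K}).

Lemma coord_lin j : is_lin_fnl (coord eK j).
Proof. by move=> k u1 u2; rewrite linearD linearZ. Qed.

Lemma tK_coord b : is_lin_fnl b ->
  tK b = \sum_(j < \dim {:K}) b eK`_j *: tK (coord eK j).
Proof.
move=> b_lin; apply: tK_eq => u.
rewrite (lin_sum kap_lin) (lin_sum iota_lin) fm_sumr.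
rewrite {1}(coord_vbasis (memvf u)) (@lin_sum _ _ C^o _ b_lin).
apply: eq_bigr => j _.
rewrite (@linZ _ _ C^o _ b_lin) (linZ kap_lin) iotaZ fmZr mulrC.
by rewrite -(tK_spec (coord_lin j)).
Qed.

Lemma fnl_ext_coord b h : is_lin_fnl b ->
  fnl_ext b h = \sum_(j < \dim {:K}) b eK`_j * fnl_ext (coord eK j) h.
Proof.
move=> b_lin; rewrite /fnl_ext (tK_coord b_lin) (lin_sum kap_lin).
rewrite (lin_sum iota_lin) fm_sumr.
by apply: eq_bigr => j _; rewrite (linZ kap_lin) iotaZ fmZr.
Qed.

Lemma R'_diff_coord a a' h : R' a -> R' a' ->
  a' h - a h = \sum_(j < \dim {:K})
    (fnl_res a' eK`_j - fnl_res a eK`_j) * fnl_ext (coord eK j) h.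
Proof.
move=> Ra Ra'; have la := fnl_res_lin (R'_lin Ra).
have la' := fnl_res_lin (R'_lin Ra').
rewrite -{1}(fnl_resK Ra') -{1}(fnl_resK Ra).
rewrite (fnl_ext_coord _ la') (fnl_ext_coord _ la) -sumrB.
by apply: eq_bigr => j _; rewrite mulrBl.
Qed.

Lemma cover_EA4 : EA4 br iota' Ecov.
Proof.
move=> b /cover_roots [a [Ra ->]].
have [eps [eps_gt0 eps_a]] := R'_discrete Ra.
pose M i := \sum_j `|fnl_ext (coord eK j) (tnth (vbasis {:H}) i)|.
pose S := \sum_i M i.
have M_ge0 i : 0 <= M i by rewrite sumr_ge0.
have S_ge0 : 0 <= S by rewrite sumr_ge0.
have M_le_S i : M i <= S by rewrite /S (bigD1 i) //= lerDl sumr_ge0.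
have S1_gt0 : 0 < S + 1 by rewrite ltr_wpDl.
(* The coordinates of a root of R' are linear in those of its restriction to
   K, with coefficients bounded by S. *)
exists (eps / (S + 1)); split=> [|b' /cover_roots [a' [Ra' ->]] close].
  by rewrite divr_gt0.
suff -> : a' = a by [].
apply: eps_a => // i; rewrite R'_diff_coord //.
apply: le_lt_trans (ler_norm_sum_mul (e := eps / (S + 1)) _ _) _.
  by move=> j; move: (close j); rewrite !(tnth_nth 0) => /ltW.
apply: le_lt_trans (ler_wpM2l _ (M_le_S i)) _; first by rewrite ltW ?divr_gt0.
by rewrite mulrAC ltr_pdivrMr // ltr_pM2l // ltrDl.
Qed.

Lemma cover_EA5 : EA5 br fm iota' Ecov.
Proof.
split=> [P Q PQ [b1 Pb1] [b2 Qb2] PQ_orth|s /cover_roots [s0 [Rs0 ->]] iso_s].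
  pose P' a := R' a /\ P (fnl_res a); pose Q' a := R' a /\ Q (fnl_res a).
  have lift_root b : P b \/ Q b -> exists2 a, R' a & b = fnl_res a.
    by move/PQ => [/cover_roots [a [Ra ->]] _]; exists a.
  apply: (R'_connected (P := P') (Q := Q')).
  - move=> a; split=> [[Ra na]|PQa].
      have : root_set br iota' Ecov (fnl_res a) /\
             nonisotropic fm iota' (fnl_res a).
        by split; [apply/cover_roots; exists a | apply/nonisotropic_res].
      by case/PQ => [Pa|Qa]; [left | right].
    have [Ra PQra] : R' a /\ (P (fnl_res a) \/ Q (fnl_res a)).
      by case: PQa => -[Ra PQ_a]; split=> //; [left | right].
    by have [_ /(nonisotropic_res Ra) na] := iffRL (PQ _) PQra.
  - have [a Ra e] := lift_root _ (or_introl Pb1).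
    by exists a; split; rewrite -?e.
  - have [a Ra e] := lift_root _ (or_intror Qb2).
    by exists a; split; rewrite -?e.
  - move=> a a' [Ra Pa] [Ra' Qa']; exact/(fnl_form_res _ Ra Ra')/PQ_orth.
have iso_s0 : ~ nonisotropic fm iota s0 by move/(nonisotropic_res Rs0).
have [a [Ra [na Ras0]]] := R'_nonisolated Rs0 iso_s0.
exists (fnl_res a); split; first by apply/cover_roots; exists a.
split; first exact/nonisotropic_res.
by apply/cover_roots; exists (fnl_add a s0).
Qed.

Theorem cover_EALA : is_EALA br fm iota' Ecov.
Proof.
split; first exact: cover_lie.
split; first exact: cover_EA1.
split; [exact: cover_EA2 | exact: cover_EA3 | exact: cover_EA4 |].
exact: cover_EA5.
Qed.

End Cover.
End Subsystem.
End ExtendedAffine.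

Unset Implicit Arguments.

Theorem proposition4p3 (R : realType) (V : lmodType R[i])
  (br : V -> V -> V) (fm : V -> V -> R[i])
  (H : vectType R[i]) (iota : H -> V)
  (hE : is_EALA br fm iota (fun _ : V => True))
  (hred : reduced_quotient fm iota (root_set br iota (fun _ : V => True)))
  (R' : fnl_set H) (H' : {vspace H})
  (hR' : is_closed_subsystem fm iota R' (root_set br iota (fun _ : V => True)))
  (hH' : is_cover fm iota R' H') :
  (is_EALA br fm (fun u : subvs_of H' => iota (vsval u))
     (lie_cover br iota R' (fun h => h \in H')) /\
   forall b : subvs_of H' -> R[i],
     root_set br (fun u : subvs_of H' => iota (vsval u))
       (lie_cover br iota R' (fun h => h \in H')) b <->
     exists a, R' a /\ b = (fun u => a (vsval u))) /\
  (is_EALA br fm iota (lie_cover br iota R' (fun _ : H => True)) /\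
   forall b : H -> R[i],
     root_set br iota (lie_cover br iota R' (fun _ : H => True)) b <-> R' b).
Proof.
have [tvec_in_H' H'_nondeg] := hH'.
have vsval_lin k (u1 u2 : subvs_of H') :
  vsval (k *: u1 + u2) = k *: vsval u1 + vsval u2 by rewrite linearD linearZ.
have tvec_in_subvs a t : R' a -> nonisotropic fm iota a ->
    is_tvec fm iota a t -> exists u : subvs_of H', t = vsval u.
  move=> Ra na a_t; exists (vsproj H' t).
  by rewrite vsprojK // (tvec_in_H' a t).
have subvs_nondeg (u : subvs_of H') :
    (forall u' : subvs_of H', fm (iota (vsval u)) (iota (vsval u')) = 0) ->
    u = 0.
  move=> u0; apply/val_inj/(H'_nondeg _ (subvsP u)) => h' h'H'.
  by have := u0 (vsproj H' h'); rewrite vsprojK.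
have in_H'E h : h \in H' <-> exists u : subvs_of H', h = vsval u.
  split=> [h_in|[u ->]]; last exact: subvsP.
  by exists (vsproj H' h); rewrite vsprojK.
have tvec_in_H a t : R' a -> nonisotropic fm iota a ->
    is_tvec fm iota a t -> exists h, t = h.
  by exists t.
have full_HpE (h : H) : True <-> exists h', h = h' by split=> // _; exists h.
split; split.
- exact: (cover_EALA hE hR' vsval_lin subvs_inj tvec_in_subvs subvs_nondeg
    in_H'E).
- exact: (cover_roots hE hR' vsval_lin tvec_in_subvs subvs_nondeg in_H'E).
- exact: (cover_EALA hE hR' (kap := fun h : H => h) (fun _ _ _ => erefl)
    (@inj_id H) tvec_in_H (iota_nondeg hE) full_HpE).
- move=> b; rewrite (cover_roots hE hR' (kap := fun h : H => h)
    (fun _ _ _ => erefl) tvec_in_H (iota_nondeg hE) full_HpE).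
  by split=> [[a [Ra ->]]|Rb] //; exists b.
Qed.
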